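(* Let $U\subseteq(\Sigma\Gamma)^*$ be a regular $(\Sigma\Gamma)^*$-prefix closed set and $T=U\Sigma^*\Gamma^*$. Then $\mathit{maxsync}(T,T)$ is regular.
   Context: $\Sigma,\Gamma$ are disjoint finite alphabets. A set $U\subseteq(\Sigma\Gamma)^*$ is $(\Sigma\Gamma)^*$-prefix closed if $uab\in U$ implies $u\in U$ for all $u\in(\Sigma\Gamma)^*$, $a\in\Sigma$, $b\in\Gamma$. For $w\in(\Sigma\cup\Gamma)^*$, $\llbracket w\rrbracket=(\pi_{\mathtt i}(w),\pi_{\mathtt o}(w))$ where $\pi_{\mathtt i}$ (resp. $\pi_{\mathtt o}$) deletes all letters of $\Gamma$ (resp. $\Sigma$). A shift of $w$ is a position $i\in\{1,\dots,|w|-1\}$ with exactly one of $w[i],w[i+1]$ in $\Sigma$, $\mathit{shift}(w)$ is the number of shifts, and $\mathrm{Reg}_{\mathsf{FS}}$ is the class of regular languages $L$ with $\sup_{w\in L}\mathit{shift}(w)<\infty$. For $x\in(\Sigma\cup\Gamma)^*$, $x^{-1}T=\{z:xz\in T\}$, and $w[1,i]$ is the prefix of $w$ of length $i$. For $w,w'\in T$ with $\llbracket w\rrbracket=\llbracket w'\rrbracket$, write $w\preceq_T w'$ if for all $i\le|w|$, $(w'[1,i])^{-1}T\in\mathrm{Reg}_{\mathsf{FS}}$ implies $(w[1,i])^{-1}T\in\mathrm{Reg}_{\mathsf{FS}}$. $\mathit{maxsync}(T,T)=\{w\in T:\ w'\preceq_T w\text{ for all }w'\in T\text{ with }\llbracket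 w'\rrbracket=\llbracket w\rrbracket\}$. *)

From mathcomp Require Import all_boot.
Set Implicit Arguments. Unset Strict Implicit. Unset Printing Implicit Defensive.

Section Words.
Variables (Sig Gam : finType).

Definition letter := (Sig + Gam)%type.
Definition word := seq letter.
Definition lang := word -> Prop.

Definition regular (L : lang) : Prop :=
  exists (Q : finType) (q0 : Q) (delta : Q -> letter -> Q) (F : pred Q),
    forall w, L w <-> F (foldl delta q0 w).

Definition isSig (c : letter) : bool := if c is inl _ then true else false.

Fixpoint inSG (w : word) : bool :=
  match w with
  | [::] => true
  | inl _ :: inr _ :: w' => inSG w'
  | _ => false
  end.

Definition SG_prefix_closed (U : lang) : Prop :=
  forall (u : word) (a : Sig) (b : Gam),
    inSG u -> U (u ++ [:: inl a; inr b]) -> U u.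

Definition TofU (U : lang) : lang :=
  fun w => exists (u : word) (v : seq Sig) (x : seq Gam),
    U u /\ w = u ++ map inl v ++ map inr x.

Definition proj_i (w : word) : seq Sig :=
  pmap (fun c : letter => if c is inl a then Some a else None) w.
Definition proj_o (w : word) : seq Gam :=
  pmap (fun c : letter => if c is inr b then Some b else None) w.
Definition sem (w : word) : seq Sig * seq Gam := (proj_i w, proj_o w).

Fixpoint shift (w : word) : nat :=
  match w with
  | a :: ((b :: _) as w') => (isSig a != isSig b) + shift w'
  | _ => 0
  end.

Definition RegFS (L : lang) : Prop :=
  regular L /\ exists k, forall w, L w -> shift w <= k.

Definition lquot (x : word) (T : lang) : lang := fun z => T (x ++ z).

Definition preceq (T : lang) (w w' : word) : Prop :=
  forall i, i <= size w ->
    RegFS (lquot (take i w') T) -> RegFS (lquot (take i w) T).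

Definition maxsync (T : lang) : lang :=
  fun w => T w /\ forall w', T w' -> sem w' = sem w -> preceq T w' w.

End Words.

From mathcomp Require Import all_boot zify.
From Stdlib Require Import Classical ClassicalDescription Lia.
Set Implicit Arguments. Unset Strict Implicit. Unset Printing Implicit Defensive.

(* Since U only contains alternating words, a word of U has as many shifts as letters; hence
   x^{-1}T is in Reg_FS exactly when the extensions of x in U have bounded length.  So a word w
   of T is not maximal exactly when it leaves the alternating pattern after some prefix x with a
   nonempty block of letters of the wrong type, while x followed by the next letter c of the
   right type still has unboundedly long extensions in U: moving c forward yields a word with
   the same projections that is better at position |x|+1.  Such a deviation is detected by a
   finite automaton that runs a DFA for U along the alternating prefix; whether a DFA state has
   unboundedly long accepted continuations is a property of the state alone. *)

Section RegularClosure.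
Variables (Sig Gam : finType).
Local Notation word := (word Sig Gam).
Local Notation lang := (lang Sig Gam).

Lemma regular_ext (L M : lang) : (forall w, L w <-> M w) -> regular L -> regular M.
Proof. by move=> LM [Q [q0 [d [F LF]]]]; exists Q, q0, d, F => w; rewrite -LM. Qed.

Lemma regular_and (L M : lang) :
  regular L -> regular M -> regular (fun w => L w /\ M w).
Proof.
move=> [Q1 [q1 [d1 [F1 LF]]]] [Q2 [q2 [d2 [F2 MF]]]].
exists (Q1 * Q2)%type, (q1, q2), (fun s c => (d1 s.1 c, d2 s.2 c)),
  (fun s => F1 s.1 && F2 s.2) => w.
have -> : foldl (fun s c => (d1 s.1 c, d2 s.2 c)) (q1, q2) w =
          (foldl d1 q1 w, foldl d2 q2 w).
  by elim: w q1 q2 {LF MF} => //= c w IHw q1 q2; rewrite IHw.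
by rewrite LF MF; split=> [[-> ->] | /andP].
Qed.

Lemma regular_lquot (x : word) (L : lang) : regular L -> regular (lquot x L).
Proof.
move=> [Q [q0 [d [F LF]]]]; exists Q, (foldl d q0 x), d, F => w.
by rewrite /lquot LF foldl_cat.
Qed.

Lemma regular_all (p : pred (Sig + Gam)) : regular (fun w : word => all p w).
Proof.
exists bool, true, (fun b c => b && p c), id => w.
suff -> : forall b, foldl (fun b c => b && p c) b w = b && all p w by [].
by elim: w => [|c w IHw] b /=; rewrite ?andbT // IHw andbA.
Qed.

Lemma regular_cat (L M : lang) : regular L -> regular M ->
  regular (fun w => exists u s, L u /\ M s /\ w = u ++ s).
Proof.
move=> [Q1 [q1 [d1 [F1 LF]]]] [Q2 [q2 [d2 [F2 MF]]]].
pose restart q : {set Q2} := if F1 q then [set q2] else set0.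
pose step (s : Q1 * {set Q2}) c :=
  (d1 s.1 c, [set d2 r c | r in s.2] :|: restart (d1 s.1 c)).
have restartP w r : r \in restart (foldl d1 q1 w) <-> L w /\ r = q2.
  rewrite /restart LF; case: (F1 _); rewrite ?inE.
    by split=> [/eqP -> | [_ ->]].
  by split=> [|[]].
have stepP w : let s := foldl step (q1, restart q1) w in s.1 = foldl d1 q1 w /\
  forall r, r \in s.2 <-> exists u t, L u /\ w = u ++ t /\ r = foldl d2 q2 t.
  elim/last_ind: w => [|w c [IH1 IH2]] /=.
    split=> // r; rewrite (restartP [::]); split=> [[Le ->] | [[|? ?] [[|? ?] [Le [_ ->]]]]] //.
    by exists [::], [::].
  rewrite foldl_rcons /= IH1 -foldl_rcons; split=> // r.
  rewrite inE; split.
    case/orP=> [/imsetP[r' /IH2[u [t [Lu [-> ->]]]] ->] | /restartP[Lw ->]].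
      by exists u, (rcons t c); rewrite rcons_cat foldl_rcons.
    by exists (rcons w c), [::]; rewrite cats0.
  case=> u [t [Lu []]]; case/lastP: t => [|t c'].
    by rewrite cats0 => -> ->; apply/orP; right; apply/restartP.
  rewrite -rcons_cat => /rcons_inj[Ew <-]; rewrite foldl_rcons => ->.
  by apply/orP; left; apply/imsetP; exists (foldl d2 q2 t) => //; apply/IH2; exists u, t.
exists (Q1 * {set Q2})%type, (q1, restart q1), step,
  (fun s : Q1 * {set Q2} => [exists r in s.2, F2 r]) => w.
have [_ IH2] := stepP w; split.
  case=> u [s [Lu [Ms Ew]]]; apply/existsP; exists (foldl d2 q2 s).
  by apply/andP; split; [apply/IH2; exists u, s | apply/MF].
by case/existsP=> r /andP[/IH2[u [t [Lu [-> ->]]]]]; rewrite -MF => Mt; exists u, t.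
Qed.

End RegularClosure.

Section Words.
Variables (Sig Gam : finType).
Local Notation word := (word Sig Gam).

Lemma all_isSigP (s : word) : all (@isSig _ _) s <-> exists v, s = map inl v.
Proof.
split=> [|[v ->]]; last by elim: v.
elim: s => [|[a|b] s IHs] //=; first by exists [::].
by case/IHs=> v ->; exists (a :: v).
Qed.

Lemma all_isGamP (s : word) : all (predC (@isSig _ _)) s <-> exists x, s = map inr x.
Proof.
split=> [|[x ->]]; last by elim: x.
elim: s => [|[a|b] s IHs] //=; first by exists [::].
by case/IHs=> x ->; exists (b :: x).
Qed.

Lemma shift_le_size (w : word) : shift w <= (size w).-1.
Proof. by elim: w => //= a [|b w] /= IHw //; lia. Qed.

Lemma shift_cat_le (x y : word) : shift (x ++ y) <= shift x + shift y + 1.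
Proof.
elim: x => [|a [|b x] IHx] /=; first lia.
  by case: y {IHx} => //= c y; lia.
by move: IHx => /=; lia.
Qed.

Lemma shift_drop_le n (w : word) : shift (drop n w) <= shift w.
Proof.
elim: w n => [|a w IHw] [|n] //=; apply: leq_trans (IHw n) _.
by case: w {IHw} => //= b w; lia.
Qed.

Lemma shift_sorted_le (v : seq Sig) (x : seq Gam) : shift (map inl v ++ map inr x) <= 1.
Proof.
have shift_map (T : Type) (f : T -> letter Sig Gam) b (s : seq T) :
  (forall t, isSig (f t) = b) -> shift (map f s) = 0.
  by move=> fb; elim: s => //= t [|t' s] //=; rewrite !fb eqxx.
have := shift_cat_le (map inl v) (map inr x).
by rewrite (shift_map _ _ true) // (shift_map _ _ false).
Qed.

Fixpoint alternating (p : bool) (w : word) : bool :=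
  if w is c :: w' then (isSig c == p) && alternating (~~ p) w' else true.

Lemma alternating_cat p (x y : word) :
  alternating p (x ++ y) = alternating p x && alternating (odd (size x) (+) p) y.
Proof.
by elim: x p => //= c x IHx p; rewrite IHx andbA addbN addNb.
Qed.

Lemma alternating_rcons p (x : word) c :
  alternating p (rcons x c) = alternating p x && (isSig c == odd (size x) (+) p).
Proof. by rewrite -cats1 alternating_cat /= andbT. Qed.

Lemma inSGE (u : word) : inSG u = alternating true u && ~~ odd (size u).
Proof.
elim: u {-2}u (leqnn (size u)) => [|c u IHu] [|[a|b] [|[a'|b'] w]] //= w_le.
by rewrite IHu //=; lia.
Qed.

Lemma alternating_shift p (w : word) : alternating p w -> shift w = (size w).-1.
Proof.
elim: w p => [|c w IHw] p // /andP[/eqP cp alt].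
have := IHw _ alt; case: w alt {IHw} => [|d w] //= /andP[/eqP dp _] ->.
by rewrite cp dp; case: (p).
Qed.

Definition part (p : bool) (w : word) := [seq c <- w | isSig c == p].

Lemma sem_partP (w w' : word) : sem w = sem w' <-> forall p, part p w = part p w'.
Proof.
have partT s : part true s = map inl (proj_i s) by elim: s => //= -[a|b] s ->.
have partF s : part false s = map inr (proj_o s) by elim: s => //= -[a|b] s ->.
split=> [[Ei Eo] [] | E]; rewrite ?partT ?partF ?Ei ?Eo //.
have := E true; have := E false; rewrite !partT !partF.
by move=> /(inj_map (@inr_inj _ _)) Eo /(inj_map (@inl_inj _ _)) Ei; rewrite /sem Ei Eo.
Qed.

Lemma inSG_cat (x y : word) : inSG x -> inSG (x ++ y) = inSG y.
Proof.
by rewrite !inSGE alternating_cat size_cat oddD => /andP[-> /negbTE ->].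
Qed.

Lemma inSG_rcons2P (s : word) : inSG s ->
  s = [::] \/ exists s0 a b, s = s0 ++ [:: inl a; inr b] /\ inSG s0.
Proof.
case/lastP: s => [|s1 c2] SGs; first by left.
case/lastP: s1 SGs => [|s0 c1]; first by case: c2.
right; move: SGs; rewrite inSGE !alternating_rcons !size_rcons /= negbK.
case/andP=> /andP[/andP[alt /eqP e1] /eqP e2] ev; rewrite (negbTE ev) in e1 e2.
case: c1 c2 e1 e2 => [a|//] [//|b] _ _.
by exists s0, a, b; rewrite -!cats1 -catA inSGE alt ev.
Qed.

Lemma part_cat q (x y : word) : part q (x ++ y) = part q x ++ part q y.
Proof. exact: filter_cat. Qed.

Lemma size_parts (w : word) : size w = size (part true w) + size (part false w).
Proof. by elim: w => //= -[a|b] w /= ->; rewrite ?addSn ?addnS. Qed.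

Lemma part_part p q (r : word) :
  part p (part q r) = if p == q then part p r else [::].
Proof.
rewrite /part -filter_predI; case: (p =P q) => [<-|/eqP pq].
  by apply: eq_filter => c /=; rewrite andbb.
rewrite -(filter_pred0 r); apply: eq_filter => c /=.
by case: (isSig c) p q pq => [] [] [].
Qed.

Lemma part_sorted q (r : word) : part q (part true r ++ part false r) = part q r.
Proof. by rewrite part_cat !part_part; case: q; rewrite ?cats0. Qed.

Lemma size_sem (w w' : word) : sem w = sem w' -> size w = size w'.
Proof. by move/sem_partP=> E; rewrite size_parts (size_parts w') !E. Qed.

End Words.

Lemma regular_TofU (Sig Gam : finType) (U : lang Sig Gam) : regular U -> regular (TofU U).
Proof.
move=> regU.
have regSG := regular_cat (regular_all (@isSig Sig Gam)) (regular_all (predC (@isSig _ _))).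
apply: regular_ext (regular_cat regU regSG) => w; split.
  case=> u [s [Uu [[s1 [s2 [/all_isSigP[v ->] [/all_isGamP[x ->] ->]]]] ->]]].
  by exists u, v, x.
case=> u [v [x [Uu ->]]]; exists u, (map inl v ++ map inr x); do 2!split=> //.
exists (map inl v), (map inr x); split; first by apply/all_isSigP; exists v.
by split=> //; apply/all_isGamP; exists x.
Qed.

Section Synchronisation.
Variables (Sig Gam : finType) (U : lang Sig Gam).
Hypothesis U_SG : forall w, U w -> inSG w.
Hypothesis U_closed : SG_prefix_closed U.
Hypothesis U_regular : regular U.
Local Notation word := (word Sig Gam).
Local Notation T := (TofU U).

Definition unbounded (x : word) := forall k, exists s, U (x ++ s) /\ k <= size s.

Lemma unbounded_catl (x y : word) : unbounded (x ++ y) -> unbounded x.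
Proof.
move=> unb k; have [s [Us le_ks]] := unb k.
by exists (y ++ s); rewrite catA size_cat; split=> //; lia.
Qed.

Lemma unbounded_alternating (x : word) : unbounded x -> alternating true x.
Proof.
by case/(_ 0)=> s [/U_SG]; rewrite inSGE alternating_cat => /andP[/andP[]].
Qed.

Lemma SG_prefix_closed_cat (x s : word) : inSG x -> inSG s -> U (x ++ s) -> U x.
Proof.
move=> SGx; have [n] := ubnP (size s); elim: n s => // n IHn s.
move=> size_s /inSG_rcons2P[-> | [s0 [a [b [Es SGs0]]]]]; first by rewrite cats0.
rewrite Es catA => /U_closed; rewrite inSG_cat // => /(_ SGs0) Uxs0.
by apply: (IHn s0 _ SGs0 Uxs0); rewrite Es size_cat /= in size_s; lia.
Qed.

Lemma unbounded_mem (x : word) : unbounded x -> inSG x -> U x.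
Proof.
move=> unb SGx; have [s [Uxs _]] := unb 0.
by apply: SG_prefix_closed_cat (Uxs) => //; rewrite -(inSG_cat _ SGx); apply: U_SG.
Qed.

Lemma shift_lquot_le k (x z : word) :
  (forall s, U (x ++ s) -> size s < k) -> T (x ++ z) -> shift z <= k.+1.
Proof.
move=> small [u [v [y [Uu E]]]]; set t := map inl v ++ map inr y in E.
have t_le := shift_sorted_le v y; rewrite -/t in t_le.
have [le_xu | lt_ux] := leqP (size x) (size u).
  have Eu : u = x ++ drop (size x) u.
    by rewrite -{1}(cat_take_drop (size x) u) -(takel_cat t le_xu) -E take_size_cat.
  have -> : z = drop (size x) u ++ t.
    by move/(congr1 (drop (size x))): E; rewrite {1}Eu -catA !drop_size_cat.
  have Uxd : U (x ++ drop (size x) u) by rewrite -Eu.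
  have := small _ Uxd; have := shift_le_size (drop (size x) u).
  have := shift_cat_le (drop (size x) u) t; lia.
have -> : z = drop (size x - size u) t.
  by move/(congr1 (drop (size x))): E; rewrite drop_size_cat // drop_cat ltnNge (ltnW lt_ux).
by apply: leq_trans (shift_drop_le _ _) _; lia.
Qed.

Lemma RegFS_lquotE (x : word) : RegFS (lquot x T) <-> ~ unbounded x.
Proof.
split=> [[_ [k shift_le]] unb | bounded].
  have [s [Us le_ks]] := unb k.+2.
  have Ts : T (x ++ s) by exists (x ++ s), [::], [::]; rewrite !cats0.
  move/U_SG: Us; rewrite inSGE alternating_cat => /andP[/andP[_ /alternating_shift]].
  by have := shift_le s Ts; lia.
split; first exact/regular_lquot/regular_TofU.
have [k small] : exists k, forall s, U (x ++ s) -> size s < k.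
  apply: NNPP => nok; apply: bounded => k; apply: NNPP => nk; apply: nok; exists k => s Us.
  by rewrite ltnNge; apply/negP => le_ks; apply: nk; exists s.
by exists k.+1 => z; apply: shift_lquot_le.
Qed.

(* [pre] is an alternating prefix already read and [p] the type of the letter expected after it;
   the deviation of the proof idea is [deviates [::] true]. *)
Definition deviates (pre : word) (p : bool) (w : word) := exists x y c z,
  [/\ w = x ++ y ++ c :: z, y <> [::], ~~ has (fun d => isSig d == isSig c) y,
      alternating p (rcons x c) & unbounded (pre ++ rcons x c)].

Lemma deviates_nil pre p : ~ deviates pre p [::].
Proof. by case=> -[|? ?] [[|? ?] [? [? []]]]. Qed.

Lemma deviates_cons pre p d w : isSig d = p ->
  deviates pre p (d :: w) <-> deviates (rcons pre d) (~~ p) w.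
Proof.
move=> dp; split.
  case=> -[|e x] [y [c [z [Ew y0 noy alt unb]]]].
    case: y Ew y0 noy => [|e y] //= [<- _] _; rewrite dp.
    by move: alt => /= /andP[/eqP -> _]; rewrite eqxx.
  case: Ew alt unb => <- -> /= /andP[_ alt]; rewrite -cat_rcons => unb.
  by exists x, y, c, z.
case=> x [y [c [z [-> y0 noy alt unb]]]].
by exists (d :: x), y, c, z; split; rewrite //= ?dp ?eqxx -?cat_rcons.
Qed.

Lemma part_cons_inj q c (w1 w2 : word) :
  part q (c :: w1) = part q (c :: w2) -> part q w1 = part q w2.
Proof. by rewrite /part /=; case: ifP => // _ [->]. Qed.

Lemma take_nondeviating (X : word) pre p w r :
  alternating p X -> unbounded (pre ++ X) -> (forall q, part q w = part q (X ++ r)) ->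
  ~ deviates pre p w -> take (size X) w = X.
Proof.
elim: X pre p w => [|c X IHX] pre p w; first by rewrite take0.
case/andP=> /eqP cp altX unb parts nodev.
have has_p : has (fun d => isSig d == p) w.
  by rewrite has_filter -/(part p w) parts /part /= cp eqxx.
case: (split_find has_p) parts nodev => e y z /eqP ep noy parts nodev.
have ec : e = c.
  move: (parts p); rewrite cat_rcons part_cat.
  have -> : part p y = [::] by apply/eqP; rewrite -[_ == _]negbK -has_filter.
  by rewrite /part /= ep cp eqxx => -[].
case: y noy parts nodev => [|d y] noy parts nodev; last first.
  case: nodev; exists [::], (d :: y), e, z; split=> //; first by rewrite cat_rcons.
  - by rewrite ep.
  - by rewrite /= ep eqxx.
  - by rewrite ec; apply: (@unbounded_catl _ X); rewrite -catA.
rewrite /= ec in parts nodev *; congr (_ :: _).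
apply: (IHX (rcons pre c) (~~ p) z altX); first by rewrite cat_rcons.
  by move=> q; apply: part_cons_inj (parts q).
by rewrite -deviates_cons.
Qed.

Lemma TofU_sorted (x r : word) : U x -> T (x ++ part true r ++ part false r).
Proof.
move=> Ux.
have [v ->] : exists v, part true r = map inl v.
  by apply/all_isSigP/allP => c; rewrite mem_filter => /andP[/eqP].
have [y ->] : exists y, part false r = map inr y.
  by apply/all_isGamP/allP => c; rewrite mem_filter => /andP[/eqP /= ->].
by exists x, v, y.
Qed.

Lemma TofU_resync x y c z : alternating true (rcons x c) -> unbounded (rcons x c) ->
  ~~ has (fun d => isSig d == isSig c) y ->
  exists2 w', T w' & sem w' = sem (x ++ y ++ c :: z) /\ take (size x).+1 w' = rcons x c.
Proof.
move=> alt unb noy.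
have part_y : part (isSig c) y = [::] by apply/eqP; rewrite -[_ == _]negbK -has_filter.
have := alt; rewrite alternating_rcons addbT => /andP[altx /eqP cx].
case Sc: (isSig c) in part_y cx.
  have SGx : inSG x by rewrite inSGE altx -cx.
  have Ux : U x by apply: unbounded_mem SGx; rewrite -cats1 in unb; apply: unbounded_catl unb.
  exists (x ++ part true (y ++ c :: z) ++ part false (y ++ c :: z)); first exact: TofU_sorted.
  split; first by apply/sem_partP => q; rewrite part_cat part_sorted -part_cat.
  by rewrite part_cat part_y /part /= Sc eqxx /= -cat_rcons take_size_cat ?size_rcons.
have SGxc : inSG (rcons x c) by rewrite inSGE alt size_rcons /= -cx.
exists (rcons x c ++ part true (y ++ z) ++ part false (y ++ z)).
  exact/TofU_sorted/unbounded_mem.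
split; last by rewrite take_size_cat ?size_rcons.
apply/sem_partP => q; rewrite part_cat part_sorted -cats1 !part_cat -!catA.
by case: q; rewrite ?part_y /part /= Sc.
Qed.

Theorem maxsyncE w : T w -> maxsync T w <-> ~ deviates [::] true w.
Proof.
move=> Tw; split=> [[_ max] [x [y [c [z [Ew y0 noy alt unb]]]]] | nodev].
  have [w' Tw' [sem_w' take_w']] := TofU_resync z alt unb noy.
  rewrite -Ew in sem_w'.
  have le_w' : (size x).+1 <= size w'.
    by rewrite (size_sem sem_w') Ew !size_cat; case: y y0 {noy Ew} => //= *; lia.
  have : unbounded (take (size x).+1 w).
    apply: NNPP => /RegFS_lquotE /(max _ Tw' sem_w' _ le_w') /RegFS_lquotE.
    by rewrite take_w'.
  case: y Ew y0 noy => [|d y] // -> _ /norP[dc _].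
  rewrite cat_cons -cat_rcons -(size_rcons x d) take_size_cat //.
  move/unbounded_alternating; rewrite alternating_rcons => /andP[_ /eqP dx].
  by move: alt dc; rewrite alternating_rcons dx => /andP[_ /eqP ->]; rewrite eqxx.
split=> // w' Tw' sem_w' i le_i; rewrite !RegFS_lquotE; apply: contra_not => unb.
have parts q : part q w = part q (take i w' ++ drop i w').
  by rewrite cat_take_drop; move/sem_partP: sem_w' => ->.
have := @take_nondeviating _ [::] _ _ _ (unbounded_alternating unb) unb parts nodev.
by rewrite size_takel // => ->.
Qed.

End Synchronisation.

Section DeviationAutomaton.
Variables (Sig Gam : finType) (U : lang Sig Gam).
Variables (Q : finType) (q0 : Q) (dl : Q -> letter Sig Gam -> Q) (FU : pred Q).
Hypothesis U_dfa : forall w, U w <-> FU (foldl dl q0 w).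
Local Notation word := (word Sig Gam).

Definition unbounded_state (q : Q) : bool :=
  excluded_middle_informative (forall k, exists s, FU (foldl dl q s) /\ k <= size s).

Lemma unbounded_stateP (x : word) : unbounded_state (foldl dl q0 x) <-> unbounded U x.
Proof.
rewrite /unbounded_state /unbounded.
by case: excluded_middle_informative; setoid_rewrite U_dfa; setoid_rewrite foldl_cat.
Qed.

(* [inl (q, p, false)]: reading the alternating prefix in state [q], next letter expected of
   type [p]; [inl (q, p, true)]: that prefix has been left, waiting for the next letter of
   type [p]; [inr b]: verdict, [b] telling whether the word deviates. *)
Definition deviation_step (s : (Q * bool * bool) + bool) (c : letter Sig Gam) :=
  match s with
  | inl (q, p, waiting) =>
      if isSig c != p then inl (q, p, true)
      else if waiting then inr (unbounded_state (dl q c)) else inl (dl q c, ~~ p, false)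
  | inr b => inr b
  end.

Definition awaits (pre : word) (p : bool) (w : word) := exists y c z,
  [/\ w = y ++ c :: z, ~~ has (fun d => isSig d == p) y, isSig c = p & unbounded U (rcons pre c)].

Lemma deviates_awaits pre p d w : isSig d != p ->
  deviates U pre p (d :: w) <-> awaits pre p (d :: w).
Proof.
move=> dp; split=> [[[|e x] [y [c [z [Ew y0 noy alt unb]]]]] | [y [c [z [Ew noy cp unb]]]]].
- move: alt => /= /andP[/eqP cp _]; rewrite cats1 in unb.
  by exists y, c, z; rewrite -cp.
- by case: Ew alt => <- _ /= /andP[/eqP dp']; move: dp; rewrite dp' eqxx.
- exists [::], y, c, z; split; rewrite //= ?cp ?eqxx ?cats1 //.
  by move=> y0; move: Ew dp; rewrite y0 => -[->]; rewrite cp eqxx.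
Qed.

Lemma foldl_deviation_verdict b (w : word) : foldl deviation_step (inr b) w = inr b.
Proof. by elim: w. Qed.

Lemma awaitingP pre p (w : word) :
  foldl deviation_step (inl (foldl dl q0 pre, p, true)) w = inr true <-> awaits pre p w.
Proof.
elim: w => [|d w IHw] /=; first by split=> // -[[|? ?] [? [? []]]].
case: (eqVneq (isSig d) p) => [dp | dp] /=.
  rewrite foldl_deviation_verdict -foldl_rcons; split.
    by case=> /unbounded_stateP unb; exists [::], d, w.
  case=> -[|e y] [c [z [/= [<- _] noy cp unb]]]; first by congr inr; apply/unbounded_stateP.
  by move: noy; rewrite /= dp eqxx.
rewrite IHw; split=> [[y [c [z [-> noy cp unb]]]] | [[|e y] [c [z [/= [Ed Ew] noy cp unb]]]]].
- by exists (d :: y), c, z; split; rewrite //= (negbTE dp).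
- by move: dp; rewrite Ed cp eqxx.
- by move: noy; rewrite /= => /norP[_ noy]; exists y, c, z.
Qed.

Lemma trackingP pre p (w : word) :
  foldl deviation_step (inl (foldl dl q0 pre, p, false)) w = inr true <-> deviates U pre p w.
Proof.
elim: w pre p => [|d w IHw] pre p /=; first by split=> // /deviates_nil.
case: (eqVneq (isSig d) p) => [dp | dp] /=.
  by rewrite -foldl_rcons IHw deviates_cons.
by rewrite deviates_awaits // -awaitingP /= dp.
Qed.

Lemma regular_nondeviating : regular (fun w => ~ deviates U [::] true w).
Proof.
exists _, (inl (q0, true, false)), deviation_step, (fun s => s != inr true) => w.
by rewrite -(trackingP [::]); split=> /eqP.
Qed.

End DeviationAutomaton.

Theorem mainTheorem19 (Sig Gam : finType) (U : lang Sig Gam) :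
  (forall w, U w -> inSG w) ->
  regular U ->
  SG_prefix_closed U ->
  regular (maxsync (TofU U)).
Proof.
move=> U_SG U_regular U_closed; have [Q [q0 [dl [FU U_dfa]]]] := U_regular.
apply: regular_ext (regular_and (regular_TofU U_regular) (regular_nondeviating U_dfa)) => w.
split=> [[Tw nodev] | max]; first exact/(maxsyncE U_SG U_closed U_regular Tw).
by case: (max) => Tw _; split=> //; apply/(maxsyncE U_SG U_closed U_regular Tw).
Qed.
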